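(* Let $p\neq q$ be primes. (a) If $1\le a\le m$ and $1\le b\le n$ are integers, then $\langle p^a,q^b\rangle\le_P\langle p^m,q^n\rangle$. (b) If $n\ge1$ and $a,b\ge1$ are integers with $2\le a+b\le n+1$, then $\langle p^a,q^b\rangle\le_P B_n(p,q)$, where $B_n(p,q)=\langle p^n,p^{n-1}q,\ldots,pq^{n-1},q^n\rangle$. (c) Let $V$ be a numerical semigroup generated by $\{n_1,\ldots,n_k\}$ ($k\ge2$), let $d=\gcd(n_1,\ldots,n_{k-1})$ and let $U=\langle n_1/d,\ldots,n_{k-1}/d,n_k\rangle$. Then $U$ and $V$ are polynomially related (namely $U\le_P V$).
   Context: A numerical semigroup is a submonoid of $(\mathbb N,+)$ with finite complement in $\mathbb N$; $\langle A\rangle$ denotes the submonoid generated by $A$. $\mathrm H_S(x)=\sum_{s\in S}x^s$. Numerical semigroups $S$ and $T$ are polynomially related, written $S\le_P T$, if there exist $f(x)\in\mathbb Z[x]$ and an integer $w\ge1$ with $\mathrm H_S(x^w)f(x)=\mathrm H_T(x)$. *)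

From HB Require Import structures.
From mathcomp Require Import all_boot all_order all_algebra.
Set Implicit Arguments. Unset Strict Implicit. Unset Printing Implicit Defensive.
Import Order.TTheory GRing.Theory Num.Theory.

Definition is_numsg (S : pred nat) : Prop :=
  [/\ S 0, (forall x y, S x -> S y -> S (x + y)) &
      exists N, forall n, N <= n -> S n].

(* <A> : the submonoid of (N,+) generated by the finite list A:
   n is in <A> iff n = sum_i c_i * A_i for some natural coefficients c_i
   (coefficients may be bounded by n without loss). *)
Definition gen (A : seq nat) : pred nat :=
  fun n => [exists c : {ffun 'I_(size A) -> 'I_n.+1},
              \sum_(i < size A) c i * nth 0 A i == n].

(* Coefficient of x^j in H_S(x^w) = sum_{s in S} x^(w s). *)
Definition HSw (S : pred nat) (w j : nat) : int :=
  Posz ((w %| j) && S (j %/ w)).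

(* S <=_P T : exists f in Z[x] and w >= 1 with H_S(x^w) f(x) = H_T(x),
   as an identity of formal power series (coefficientwise). *)
Definition poly_related (S T : pred nat) : Prop :=
  exists (f : {poly int}) (w : nat), 1 <= w /\
    forall k : nat,
      (\sum_(i < k.+1) f`_i * HSw S w (k - i))%R = Posz (T k).

Definition Bn (n p q : nat) : pred nat :=
  gen [seq p ^ (n - i) * q ^ i | i <- iota 0 n.+1].

From mathcomp Require Import all_boot all_order all_algebra.
From mathcomp Require Import ring zify.
Import GRing.Theory.
Set Implicit Arguments. Unset Strict Implicit. Unset Printing Implicit Defensive.

(* Every relation comes from a tiling: if T is the disjoint union of the translates
   F_i + w S over a finite index set, then H_S(x^w) * sum_i x^(F_i) = H_T(x).
   For (a), <p^m, q^n> is tiled by translates of p^(m-a) q^(n-b) <p^a, q^b>; for (c),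
   <B, n_k> is tiled by the translates i n_k + d <B/d, n_k> (i < d), where d is prime to
   n_k because the semigroup has finite complement.
   For (b), with [k]_z = 1 + z + ... + z^(k-1), tilings give
   H_<u,v>(x) = [u]_(x^v) / (1 - x^u) for coprime u, v, and
   H_(B_n)(x) = prod_(i<n) [q]_(x^(p^(n-i) q^i)) / (1 - x^(q^n)).
   With s = n + 1 - b the latter is a polynomial multiple of H_<p^s,q^b>(x), because
   [q]_z divides [q]_(z^m) for m prime to q; and, with w = p^(s-a),
   H_<p^s,q^b>(x) = [p^(s-a)]_(x^(q^b)) H_<p^a,q^b>(x^w). *)

Fixpoint natcomb (A : seq nat) (n : nat) : Prop :=
  if A is a :: A' then exists j m, natcomb A' m /\ n = j * a + m else n = 0.

Lemma natcomb_cons a A n :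
  natcomb (a :: A) n <-> exists j m, natcomb A m /\ n = j * a + m.
Proof. by []. Qed.

Lemma genE (A : seq nat) n :
  gen A n <-> exists c : 'I_(size A) -> nat, \sum_(i < size A) c i * nth 0 A i = n.
Proof.
split; first by case/existsP=> c /eqP <-; exists (fun i => val (c i)).
case=> c sum_c; apply/existsP.
have c_bound i : c i * (nth 0 A i != 0) < n.+1.
  case: eqP => [_|/eqP Ai0]; first by rewrite muln0.
  rewrite muln1 ltnS -sum_c (bigD1 i) //= (leq_trans _ (leq_addr _ _)) //.
  by rewrite leq_pmulr // lt0n.
exists [ffun i => Ordinal (c_bound i)]; apply/eqP; rewrite -[RHS]sum_c.
apply: eq_bigr => i _.
by rewrite ffunE /=; case: eqP => [->|]; rewrite ?muln0 ?muln1.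
Qed.

Lemma natcombE (A : seq nat) n :
  natcomb A n <-> exists c : 'I_(size A) -> nat, \sum_(i < size A) c i * nth 0 A i = n.
Proof.
elim: A n => [|a A IH] n /=.
  split; first by move->; exists (fun=> 0); rewrite big_ord0.
  by case=> c; rewrite big_ord0.
split.
- case=> j [m [/IH [c <-] ->]].
  exists (fun i : 'I_(size A).+1 => if unlift ord0 i is Some i' then c i' else j).
  rewrite big_ord_recl /= unlift_none; congr (_ + _).
  by apply: eq_bigr => i _; rewrite liftK.
- case=> c; rewrite big_ord_recl /= => <-.
  exists (c ord0), (\sum_(i < size A) c (lift ord0 i) * nth 0 A i).
  by split=> //; apply/IH; exists (fun i => c (lift ord0 i)).
Qed.

Lemma genP A n : gen A n <-> natcomb A n.
Proof. by rewrite genE natcombE. Qed.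

Lemma natcomb0 A : natcomb A 0.
Proof. by elim: A => [|a A IH] //=; exists 0, 0; split. Qed.

Lemma natcombD A x y : natcomb A x -> natcomb A y -> natcomb A (x + y).
Proof.
elim: A x y => [|a A IH] x y /=; first by move=> -> ->.
case=> j [m [Am ->]] [j' [m' [Am' ->]]].
by exists (j + j'), (m + m'); split; [exact: IH | ring].
Qed.

Lemma natcombM A a j : a \in A -> natcomb A (j * a).
Proof.
elim: A => [|b A IH] //=; rewrite inE => /orP[/eqP-> | Aa].
  by exists j, 0; rewrite addn0; split; first exact: natcomb0.
by exists 0, (j * a); split; first exact: IH.
Qed.

Lemma natcomb_rcons A x n :
  natcomb (rcons A x) n <-> exists m j, natcomb A m /\ n = m + j * x.
Proof.
elim: A n => [|a A IH] n /=.
  split; first by case=> j [m [-> ->]]; exists 0, j; rewrite addn0.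
  by case=> m [j [-> ->]]; exists j, 0; rewrite addn0.
split.
- case=> j [m [/IH [m' [j' [Am' ->]]] ->]].
  by exists (j * a + m'), j'; split; [exists j, m' | rewrite addnA].
- case=> m [j [[j' [m' [Am' ->]]] ->]].
  exists j', (m' + j * x); rewrite addnA; split=> //.
  by apply/IH; exists m', j.
Qed.

Lemma natcomb_dvd A g n : {in A, forall x, g %| x} -> natcomb A n -> g %| n.
Proof.
elim: A n => [|a A IH] n /= gA; first by move=> ->.
case=> j [m [Am ->]]; rewrite dvdn_add ?dvdn_mull ?(gA a) ?mem_head //.
by apply: (IH _ _ Am) => x Ax; rewrite gA // inE Ax orbT.
Qed.

Lemma natcomb_map_mul A q n : 0 < q ->
  natcomb (map (muln q) A) n <-> exists2 m, natcomb A m & n = q * m.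
Proof.
move=> q_gt0; elim: A n => [|a A IH] n /=.
  by split=> [->|[m -> ->]]; [exists 0; rewrite ?muln0 | rewrite muln0].
split.
- case=> j [m [/IH [M AM ->] ->]].
  by exists (j * a + M); [exists j, M | ring].
- case=> M [j [m [Am ->]]] ->.
  by exists j, (q * m); split; [apply/IH; exists m | ring].
Qed.

Lemma natcomb_map_div A d m : 0 < d -> {in A, forall x, d %| x} ->
  natcomb (map (divn^~ d) A) m <-> natcomb A (d * m).
Proof.
move=> d_gt0 dA.
have {2}-> : A = map (muln d) (map (divn^~ d) A).
  by rewrite -map_comp -[LHS]map_id; apply/eq_in_map => x /dA /= /divnK; rewrite mulnC.
rewrite natcomb_map_mul //; split=> [Am | [m' Am' /eqP]]; first by exists m.
by rewrite eqn_pmul2l // => /eqP->.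
Qed.

Lemma gen2P x y t : gen [:: x; y] t <-> exists u v, t = u * x + v * y.
Proof.
rewrite genP /=; split.
  by case=> u [m [[v [_ [-> ->]]] ->]]; exists u, v; rewrite addn0.
by case=> u [v ->]; exists u, (v * y); split=> //; exists v, 0; rewrite addn0.
Qed.

Lemma gen2C x y t : gen [:: x; y] t = gen [:: y; x] t.
Proof.
by apply/idP/idP => /gen2P [u [v ->]]; apply/gen2P; exists v, u; rewrite addnC.
Qed.

Lemma eq_mulmod_coprime k m i j : coprime k m -> i < k -> j < k ->
  i * m = j * m %[mod k] -> i = j.
Proof.
move=> km_co; wlog le_ij : i j / i <= j.
  move=> W ik jk E; case: (leqP i j) => [le_ij | /ltnW le_ji]; first exact: W.
  by apply/esym/W.
move=> _ jk /eqP; rewrite eq_sym eqn_mod_dvd ?leq_mul2r ?le_ij ?orbT //.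
rewrite -mulnBl Gauss_dvdl // => dvd_k.
case: (posnP (j - i)) => [|ji_gt0]; first by lia.
by have := dvdn_leq ji_gt0 dvd_k; lia.
Qed.

Lemma biggcd_dvd (B : seq nat) x : x \in B -> \big[gcdn/0]_(y <- B) y %| x.
Proof.
elim: B => [|b B IH] //; rewrite inE big_cons => /orP[/eqP-> | Bx].
  exact: dvdn_gcdl.
exact: dvdn_trans (dvdn_gcdr _ _) (IH Bx).
Qed.

Lemma numsg_gens_dvd_eq1 A g : is_numsg (gen A) -> {in A, forall x, g %| x} -> g = 1.
Proof.
move=> [_ _ [N genN]] gA; apply/eqP; rewrite -dvdn1.
have [g0 | g_gt0] := posnP g.
  by have /genP/(natcomb_dvd gA) := genN N.+1 (leqnSn N); rewrite g0.
have /genP/(natcomb_dvd gA) := genN (N * g + 1) (leq_trans (leq_pmulr _ g_gt0) (leq_addr _ _)).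
by rewrite dvdn_addr // dvdn_mull.
Qed.

Section GeometricSums.
Variable R : comNzRingType.
Local Open Scope ring_scope.

Definition geosum (k : nat) (z : R) := \sum_(i < k) z ^+ i.

Lemma geosumD m n z : geosum (m + n) z = geosum m z + z ^+ m * geosum n z.
Proof.
rewrite /geosum big_split_ord /= big_distrr /=; congr (_ + _).
by apply: eq_bigr => i _; rewrite exprD.
Qed.

Lemma geosumM a b z : geosum a z * geosum b (z ^+ a) = geosum (a * b) z.
Proof.
elim: b => [|b IH]; first by rewrite muln0 /geosum !big_ord0 mulr0.
rewrite mulnS addnC geosumD -IH /geosum big_ord_recr /= -exprM.
by rewrite mulrDr [X in _ + X]mulrC.
Qed.

Lemma prod_geosum_expn q t z :
  \prod_(i < t) geosum q (z ^+ (q ^ i)) = geosum (q ^ t) z.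
Proof.
elim: t => [|t IH]; first by rewrite big_ord0 expn0 /geosum big_ord1 expr0.
by rewrite big_ord_recr /= IH geosumM expnSr.
Qed.

Lemma geosum_dvd_exp k m z : coprime k m -> (0 < k)%N ->
  exists h, geosum k (z ^+ m) = geosum k z * h.
Proof.
move=> km_co k_gt0.
(* Modulo [geosum k z], a divisor of [z ^+ k - 1], [z ^+ a] only depends on [a %% k],
   and [i |-> i * m %% k] permutes ['I_k]. *)
have exp_mod a : z ^+ a = z ^+ (a %% k)
    + geosum k z * ((z - 1) * geosum (a %/ k) (z ^+ k) * z ^+ (a %% k)).
  have zk1 := subrX1 z k; have zka1 := subrX1 (z ^+ k) (a %/ k).
  rewrite -/(geosum _ _) in zk1; rewrite -/(geosum _ (z ^+ k)) in zka1.
  rewrite {1}(divn_eq a k) exprD mulnC exprM.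
  transitivity ((z ^+ k ^+ (a %/ k) - 1) * z ^+ (a %% k) + z ^+ (a %% k)); first by ring.
  by rewrite zka1 zk1; ring.
pose r (i : 'I_k) := Ordinal (ltn_pmod (i * m) k_gt0).
have r_inj : injective r.
  move=> i j /(congr1 val) /= E.
  exact/val_inj/(eq_mulmod_coprime km_co (ltn_ord i) (ltn_ord j)).
have -> : geosum k (z ^+ m) = \sum_(i < k) z ^+ r i
    + \sum_(i < k) geosum k z * ((z - 1) * geosum (i * m %/ k) (z ^+ k) * z ^+ r i).
  by rewrite [LHS]/geosum -big_split; apply: eq_bigr => i _ /=; rewrite -exprM mulnC [LHS]exp_mod.
have -> : \sum_(i < k) z ^+ r i = geosum k z by rewrite /geosum [RHS](reindex_inj r_inj).
by rewrite -big_distrr -{1}[geosum k z]mulr1 -mulrDr; eexists.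
Qed.

Lemma prod_geosum_dvd (z : R) p q n s t :
  coprime p q -> (0 < q)%N -> (s + t = n.+1)%N -> (0 < t <= n)%N ->
  exists h, \prod_(i < n) geosum q (z ^+ (p ^ (n - i) * q ^ i))
            = geosum (q ^ t) (z ^+ (p ^ s)) * geosum (q ^ (n - t)) (z ^+ (q ^ t)) * h.
Proof.
move=> co q_gt0 st /andP[t_gt0 le_tn].
have dvd_prod m (F G : 'I_m -> R) : (forall i, exists h, G i = F i * h) ->
    exists h, \prod_i G i = \prod_i F i * h.
  move=> FG; apply: (big_ind2 (fun a b => exists h, b = a * h)).
  - by exists 1; rewrite mulr1.
  - by move=> a1 a2 b1 b2 [h1 ->] [h2 ->]; exists (h1 * h2); ring.
  - by move=> i _; apply: FG.
have dvd_term (u : R) e i :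
    exists h, geosum q ((u ^+ (q ^ i)) ^+ (p ^ e)) = geosum q (u ^+ (q ^ i)) * h.
  by apply: geosum_dvd_exp; rewrite // coprime_sym coprimeXl.
rewrite -(subnKC le_tn) big_split_ord /= subnKC //.
rewrite -(prod_geosum_expn q t) -(prod_geosum_expn q (n - t)).
have [h1 ->] : exists h, \prod_(i < t) geosum q (z ^+ (p ^ (n - i) * q ^ i))
    = \prod_(i < t) geosum q (z ^+ (p ^ s) ^+ (q ^ i)) * h.
  apply: dvd_prod => i; have := dvd_term (z ^+ (p ^ s)) (n - i - s)%N i.
  rewrite -!exprM [(q ^ i * _)%N]mulnC mulnA -expnD subnKC //; have := ltn_ord i; lia.
have [h2 ->] : exists h, \prod_(i < n - t) geosum q (z ^+ (p ^ (n - (t + i)) * q ^ (t + i)))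
    = \prod_(i < n - t) geosum q (z ^+ (q ^ t) ^+ (q ^ i)) * h.
  apply: dvd_prod => i; have := dvd_term (z ^+ (q ^ t)) (n - (t + i))%N i.
  by rewrite -!exprM mulnA -expnD mulnC.
by exists (h1 * h2); ring.
Qed.

End GeometricSums.

Section Series.
Local Open Scope ring_scope.

Definition conv (f : {poly int}) (h : nat -> int) (k : nat) : int :=
  \sum_(i < k.+1) f`_i * h (k - i)%N.

Lemma eq_conv f h h' : h =1 h' -> conv f h =1 conv f h'.
Proof. by move=> eq_h k; apply: eq_bigr => i _; rewrite eq_h. Qed.

Lemma conv_coefM f h k K : (k <= K)%N ->
  conv f h k = (f * \poly_(i < K.+1) h i)`_k.
Proof.
move=> le_kK; rewrite coefM; apply: eq_bigr => i _.
by rewrite coef_poly ltnS (leq_trans (leq_subr _ _) le_kK).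
Qed.

Lemma conv_mul f g h : conv (f * g) h =1 conv f (conv g h).
Proof.
move=> k; rewrite (conv_coefM _ _ (leqnn k)) -mulrA coefM; apply: eq_bigr => i _.
by rewrite -conv_coefM ?leq_subr.
Qed.

Lemma conv1 h : conv 1 h =1 h.
Proof.
move=> k; rewrite /conv big_ord_recl coef1 mul1r subn0 big1 ?addr0 // => i _.
by rewrite coef1 mul0r.
Qed.

Lemma conv_sum (I : finType) (F : I -> {poly int}) h k :
  conv (\sum_i F i) h k = \sum_i conv (F i) h k.
Proof.
rewrite /conv exchange_big /=; apply: eq_bigr => i _.
by rewrite coef_sum mulr_suml.
Qed.

Lemma conv_Xn n h k : conv 'X^n h k = if (n <= k)%N then h (k - n)%N else 0.
Proof.
have [le_nk | lt_kn] := leqP n k.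
  rewrite /conv (bigD1 (Ordinal (le_nk : (n < k.+1)%N))) //= coefXn eqxx mul1r.
  rewrite big1 ?addr0 // => i /eqP ni; rewrite coefXn.
  by case: eqP => [in_ | _]; [case: ni; apply: val_inj | rewrite mul0r].
rewrite /conv big1 // => i _; rewrite coefXn.
by case: eqP => [in_ | _]; [move: (ltn_ord i); rewrite in_ ltnS leqNgt lt_kn | rewrite mul0r].
Qed.

Section Tiling.
Variables (S T : pred nat) (w : nat) (I : finType) (F : I -> nat).
Hypotheses (w_gt0 : (0 < w)%N)
  (tile_sub : forall i s, S s -> T (F i + w * s)%N)
  (tile_cover : forall t, T t -> exists i s, S s /\ t = (F i + w * s)%N)
  (tile_inj : forall i j, F i = F j %[mod w] -> i = j).

Let shifted v i k :=
  [&& v * F i <= k, v * w %| k - v * F i & S ((k - v * F i) %/ (v * w))]%N.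

Let shiftedP v i k : (0 < v)%N ->
  reflect (exists2 s, S s & k = v * (F i + w * s))%N (shifted v i k).
Proof.
move=> v_gt0; have vw_gt0 : (0 < v * w)%N by rewrite muln_gt0 v_gt0.
apply: (iffP and3P) => [[le_k dvd_k Sk] | [s Ss ->]].
  exists ((k - v * F i) %/ (v * w))%N => //.
  by rewrite mulnDr mulnA [(v * w * _)%N]mulnC divnK ?subnKC.
by rewrite mulnDr leq_addr addKn mulnA dvdn_mulr // mulKn.
Qed.

Lemma conv_tiling v : (0 < v)%N ->
  conv (\sum_i 'X^(v * F i)) (HSw S (v * w)) =1 HSw T v.
Proof.
move=> v_gt0 k; rewrite conv_sum.
have term i : conv 'X^(v * F i) (HSw S (v * w)) k = Posz (shifted v i k).
  by rewrite conv_Xn /shifted /HSw; case: leqP.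
rewrite (eq_bigr _ (fun i _ => term i)) /HSw.
case Tk: ((v %| k) && T (k %/ v))%N.
- case/andP: Tk => dvd_k /tile_cover [i [s [Ss Tks]]].
  have k_eq : k = (v * (F i + w * s))%N by rewrite -Tks mulnC divnK.
  rewrite (bigD1 i) //= big1 ?addr0; first by rewrite (introT (shiftedP i k v_gt0)) //; exists s.
  move=> j /eqP ji; case: (shiftedP j k v_gt0) => // -[r _ kr]; case: ji.
  apply: tile_inj; move/eqP: kr; rewrite k_eq eqn_pmul2l // => /eqP/(congr1 (modn^~ w)).
  by rewrite ![(F _ + _)%N]addnC ![(w * _)%N]mulnC !modnMDl.
- rewrite big1 // => j _; case: (shiftedP j k v_gt0) => // -[r Sr kr].
  by move: Tk; rewrite kr dvdn_mulr //= mulKn // tile_sub.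
Qed.

Lemma poly_related_of_tiling : poly_related S T.
Proof.
exists (\sum_i 'X^(1 * F i)), w; split=> // k.
by have := conv_tiling (ltn0Sn 0) k; rewrite /HSw mul1n dvd1n divn1 => <-.
Qed.

End Tiling.

Lemma HSw_gen2 x y w : (0 < x)%N -> (0 < w)%N -> coprime x y ->
  HSw (gen [:: x; y]) w =1 conv (geosum x 'X^(w * y)) (HSw xpredT (w * x)).
Proof.
move=> x_gt0 w_gt0 co k.
have -> : geosum x ('X^(w * y) : {poly int}) = \sum_(i < x) 'X^(w * (y * i)).
  by rewrite /geosum; apply: eq_bigr => i _; rewrite -exprM mulnA.
symmetry; apply: (@conv_tiling xpredT _ x _ (fun i : 'I_x => y * i)%N) => //.
- by move=> i s _; apply/gen2P; exists s, i; ring.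
- move=> t /gen2P [u [v ->]]; exists (Ordinal (ltn_pmod v x_gt0)), (u + v %/ x * y)%N.
  by split=> //=; rewrite {1}(divn_eq v x); ring.
- move=> i j E; apply: val_inj; apply: (eq_mulmod_coprime co (ltn_ord i) (ltn_ord j)).
  by rewrite ![(_ * y)%N]mulnC.
Qed.

Lemma HSw_xpredT_geosum c m : (0 < c)%N -> (0 < m)%N ->
  HSw xpredT c =1 conv (geosum m 'X^c) (HSw xpredT (c * m)).
Proof.
move=> c_gt0 m_gt0 k.
have -> : geosum m ('X^c : {poly int}) = \sum_(i < m) 'X^(c * i).
  by rewrite /geosum; apply: eq_bigr => i _; rewrite -exprM.
symmetry; apply: (@conv_tiling xpredT xpredT m _ (fun i : 'I_m => val i)) => //.
- move=> t _; exists (Ordinal (ltn_pmod t m_gt0)), (t %/ m)%N.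
  by rewrite /= addnC mulnC -divn_eq.
- by move=> i j; rewrite !modn_small ?ltn_ord // => /val_inj.
Qed.

End Series.

Lemma poly_related_gen2_scale x y P Q : 0 < P -> 0 < Q -> coprime (P * x) (Q * y) ->
  poly_related (gen [:: x; y]) (gen [:: P * x; Q * y]).
Proof.
move=> P_gt0 Q_gt0 co.
apply: (@poly_related_of_tiling _ _ (P * Q) ('I_Q * 'I_P)%type
          (fun ij => ij.1 * (P * x) + ij.2 * (Q * y))); first by rewrite muln_gt0 P_gt0.
- move=> [i j] s /gen2P [u [v ->]]; apply/gen2P.
  by exists (i + Q * u), (j + P * v); rewrite /=; ring.
- move=> t /gen2P [u [v ->]].
  exists (Ordinal (ltn_pmod u Q_gt0), Ordinal (ltn_pmod v P_gt0)), (u %/ Q * x + v %/ P * y).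
  split; first by apply/gen2P; exists (u %/ Q), (v %/ P).
  by rewrite /= {1}(divn_eq u Q) {1}(divn_eq v P); ring.
- have coQ : coprime Q (P * x) by move: co; rewrite coprime_sym coprimeMl => /andP[].
  have coP : coprime P (Q * y) by move: co; rewrite coprimeMl => /andP[].
  move=> [i1 j1] [i2 j2] /= E; congr pair; apply: val_inj.
  + apply: eq_mulmod_coprime coQ (ltn_ord _) (ltn_ord _) _.
    move/(congr1 (modn^~ Q)): E; rewrite !modn_dvdm ?dvdn_mull //.
    by rewrite !(mulnCA _ Q y) ![(_ + Q * _)]addnC -![Q * _]mulnC !modnMDl.
  + apply: eq_mulmod_coprime coP (ltn_ord _) (ltn_ord _) _.
    move/(congr1 (modn^~ P)): E; rewrite !modn_dvdm ?dvdn_mulr //.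
    by rewrite !(mulnCA _ P x) -![P * _]mulnC !modnMDl.
Qed.

Lemma poly_related_gen_div (B : seq nat) nk d : 0 < d -> {in B, forall x, d %| x} ->
  coprime d nk -> poly_related (gen (rcons (map (divn^~ d) B) nk)) (gen (rcons B nk)).
Proof.
move=> d_gt0 dB co.
have divB m : natcomb (map (divn^~ d) B) m <-> natcomb B (d * m) by exact: natcomb_map_div.
apply: (@poly_related_of_tiling _ _ d 'I_d (fun i => i * nk)) => //.
- move=> i s /genP /natcomb_rcons [m [j [Bm ->]]]; apply/genP/natcomb_rcons.
  by exists (d * m), (i + d * j); split; [apply/divB | ring].
- move=> t /genP /natcomb_rcons [M [J [BM ->]]].
  have /divnK dM := natcomb_dvd dB BM.
  exists (Ordinal (ltn_pmod J d_gt0)), (M %/ d + J %/ d * nk); split.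
    apply/genP/natcomb_rcons; exists (M %/ d), (J %/ d); split=> //.
    by apply/divB; rewrite mulnC dM.
  by rewrite /= {1}(divn_eq J d) -{1}dM; ring.
- by move=> i j E; apply: val_inj; apply: (eq_mulmod_coprime co (ltn_ord i) (ltn_ord j)).
Qed.

Section BinomialSemigroup.
Variables p q : nat.
Hypotheses (pq_co : coprime p q) (p_gt0 : 0 < p) (q_gt0 : 0 < q).

Lemma Bn_gensS n : [seq p ^ (n.+1 - i) * q ^ i | i <- iota 0 n.+2]
  = p ^ n.+1 :: map (muln q) [seq p ^ (n - i) * q ^ i | i <- iota 0 n.+1].
Proof.
rewrite -[iota 0 n.+2]/(0 :: iota 1 n.+1) map_cons subn0 expn0 muln1.
have -> : iota 1 n.+1 = map (addn 1) (iota 0 n.+1) by rewrite -iotaDl.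
rewrite -!map_comp; congr (_ :: _); apply: eq_map => i /=; rewrite add1n subSS expnS; ring.
Qed.

Lemma BnSP n t : Bn n.+1 p q t <-> exists c M, Bn n p q M /\ t = c * p ^ n.+1 + q * M.
Proof.
rewrite /Bn genP Bn_gensS natcomb_cons; split.
  case=> c [m [qLm ->]]; have [M LM ->] := iffLR (natcomb_map_mul _ _ q_gt0) qLm.
  by exists c, M; split=> //; apply/genP.
case=> c [M [/genP LM ->]]; exists c, (q * M); split=> //.
by apply: (iffRL (natcomb_map_mul _ _ q_gt0)); exists M.
Qed.

Lemma Bn0 t : Bn 0 p q t.
Proof. by apply/genP; exists t, 0; rewrite muln1 addn0. Qed.

Lemma Bn_addpX n M c : Bn n p q M -> Bn n p q (M + c * p ^ n.+1).
Proof.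
move/genP=> BM; apply/genP/natcombD => //.
by rewrite expnS mulnA; apply: natcombM; rewrite /= subn0 expn0 muln1 mem_head.
Qed.

Local Open Scope ring_scope.

Lemma HSw_BnS n w : (0 < w)%N -> HSw (Bn n.+1 p q) w
  =1 conv (geosum q 'X^(w * p ^ n.+1)) (HSw (Bn n p q) (w * q)).
Proof.
move=> w_gt0 k.
have -> : geosum q ('X^(w * p ^ n.+1) : {poly int}) = \sum_(i < q) 'X^(w * (p ^ n.+1 * i)).
  by rewrite /geosum; apply: eq_bigr => i _; rewrite -exprM mulnA.
symmetry; apply: (@conv_tiling _ _ q _ (fun i : 'I_q => p ^ n.+1 * i)%N) => //.
- by move=> i s Bs; apply/BnSP; exists i, s; rewrite mulnC.
- move=> t /BnSP [c [M [BM ->]]].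
  exists (Ordinal (ltn_pmod c q_gt0)), (M + c %/ q * p ^ n.+1)%N; split; first exact: Bn_addpX.
  by rewrite /= {1}(divn_eq c q); ring.
- have co : coprime q (p ^ n.+1) by rewrite coprime_sym coprimeXl.
  move=> i j E; apply: val_inj; apply: (eq_mulmod_coprime co (ltn_ord i) (ltn_ord j)).
  by rewrite ![(_ * p ^ n.+1)%N]mulnC.
Qed.

Lemma HSw_Bn n w : (0 < w)%N -> HSw (Bn n p q) w
  =1 conv (\prod_(i < n) geosum q 'X^(w * (p ^ (n - i) * q ^ i))) (HSw xpredT (w * q ^ n)).
Proof.
elim: n w => [|n IH] w w_gt0 k.
  by rewrite big_ord0 conv1 expn0 muln1 /HSw Bn0.
have wq_gt0 : (0 < w * q)%N by rewrite muln_gt0 w_gt0.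
rewrite HSw_BnS // (eq_conv _ (IH _ wq_gt0)) -conv_mul big_ord_recl subn0 expn0 muln1.
congr (conv (_ * _) (HSw _ _) k); last by rewrite expnS mulnA.
apply: eq_bigr => i _; rewrite lift0 subSS expnS; congr (geosum q 'X^_); ring.
Qed.

Lemma poly_related_gen2_Bn n a b : (0 < b <= n)%N -> (a + b <= n.+1)%N ->
  poly_related (gen [:: p ^ a; q ^ b]%N) (Bn n p q).
Proof.
move=> b_range le_abn.
set s := (n.+1 - b)%N.
have sb : (s + b = n.+1)%N by rewrite subnK //; lia.
have le_as : (a <= s)%N by rewrite /s; lia.
set w := (p ^ (s - a))%N.
have w_gt0 : (0 < w)%N by rewrite expn_gt0 p_gt0.
have wpa : (w * p ^ a = p ^ s)%N by rewrite -expnD subnK.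
have [pX_gt0 qX_gt0] : (0 < p ^ s)%N /\ (0 < q ^ b)%N by rewrite !expn_gt0 p_gt0 q_gt0.
have co_sb : coprime (p ^ s) (q ^ b) by rewrite coprimeXl // coprimeXr.
have [h Dh] := prod_geosum_dvd ('X : {poly int}) pq_co q_gt0 sb b_range.
exists (geosum w 'X^(q ^ b) * h), w; split=> // k; rewrite -/(conv _ _ k).
have U_series : HSw (gen [:: p ^ a; q ^ b]%N) w
    =1 conv (geosum (p ^ a) 'X^(w * q ^ b)) (HSw xpredT (p ^ s)).
  by rewrite -wpa; apply: HSw_gen2; rewrite ?expn_gt0 ?p_gt0 // coprimeXl // coprimeXr.
have V_series_p : HSw (gen [:: p ^ s; q ^ b]%N) 1
    =1 conv (geosum (p ^ s) 'X^(q ^ b)) (HSw xpredT (p ^ s)).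
  by move=> j; rewrite HSw_gen2 // !mul1n.
have V_series_q : HSw (gen [:: p ^ s; q ^ b]%N) 1
    =1 conv (geosum (q ^ b) 'X^(p ^ s)) (HSw xpredT (q ^ b)).
  by move=> j; rewrite /HSw gen2C -/(HSw _ _ j) HSw_gen2 1?coprime_sym // !mul1n.
have qb_series : HSw xpredT (q ^ b) =1
    conv (geosum (q ^ (n - b)) 'X^(q ^ b)) (HSw xpredT (q ^ n)).
  have -> : (q ^ n = q ^ b * q ^ (n - b))%N by rewrite -expnD subnKC //; case/andP: b_range.
  by apply: HSw_xpredT_geosum; rewrite expn_gt0 q_gt0.
have Bn_series : HSw (Bn n p q) 1
    =1 conv (\prod_(i < n) geosum q 'X^(p ^ (n - i) * q ^ i)) (HSw xpredT (q ^ n)).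
  by move=> j; rewrite HSw_Bn // mul1n; under eq_bigr do rewrite mul1n.
rewrite (eq_conv _ U_series) -conv_mul -mulrA [h * _]mulrC mulrA.
rewrite [in 'X^(w * _)]mulnC exprM geosumM wpa mulrC conv_mul -(eq_conv _ V_series_p).
rewrite (eq_conv _ V_series_q) (eq_conv _ (eq_conv _ qb_series)) -!conv_mul.
by rewrite -mulrA mulrC -Dh -Bn_series /HSw dvd1n divn1.
Qed.

End BinomialSemigroup.

Lemma prime_coprime_neq p q : prime p -> prime q -> p != q -> coprime p q.
Proof. by move=> pp pq npq; rewrite prime_coprime // dvdn_prime2 // (negbTE npq). Qed.

Theorem corollary5 :
  (forall p q : nat, prime p -> prime q -> p != q ->
     forall a b m n : nat, 1 <= a <= m -> 1 <= b <= n ->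
       poly_related (gen [:: p ^ a; q ^ b]) (gen [:: p ^ m; q ^ n]))
  /\
  (forall p q : nat, prime p -> prime q -> p != q ->
     forall n a b : nat, 1 <= n -> 1 <= a -> 1 <= b -> 2 <= a + b <= n.+1 ->
       poly_related (gen [:: p ^ a; q ^ b]) (Bn n p q))
  /\
  (forall (B : seq nat) (nk : nat),
     (* generators n_1, ..., n_(k-1) = B and n_k = nk, with k >= 2 *)
     1 <= size B ->
     all (fun x => 0 < x) (rcons B nk) ->
     is_numsg (gen (rcons B nk)) ->
     let d := \big[gcdn/0]_(x <- B) x in
     poly_related (gen (rcons [seq x %/ d | x <- B] nk)) (gen (rcons B nk))).
Proof.
split; [|split].
- move=> p q pp pq npq a b m n /andP[_ le_am] /andP[_ le_bn].
  have := @poly_related_gen2_scale (p ^ a) (q ^ b) (p ^ (m - a)) (q ^ (n - b)).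
  rewrite -!expnD !subnK //; apply; rewrite ?expn_gt0 ?prime_gt0 //.
  by rewrite coprimeXl // coprimeXr // prime_coprime_neq.
- move=> p q pp pq npq n a b _ a_gt0 b_gt0 /andP[_ le_abn].
  apply: poly_related_gen2_Bn => //;
    rewrite ?b_gt0 ?(prime_gt0 pp) ?(prime_gt0 pq) ?prime_coprime_neq //=; lia.
- move=> B nk size_B; rewrite all_rcons => /andP[nk_gt0 B_gt0] numsg d.
  have dB : {in B, forall x, d %| x} by move=> x; apply: biggcd_dvd.
  have d_gt0 : 0 < d.
    case: B size_B B_gt0 {dB numsg} @d => [|b B] //= _ /andP[b_gt0 _].
    by rewrite big_cons gcdn_gt0 b_gt0.
  apply: poly_related_gen_div => //; rewrite /coprime; apply/eqP/(numsg_gens_dvd_eq1 numsg).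
  move=> x; rewrite mem_rcons inE => /orP[/eqP-> | /dB]; first exact: dvdn_gcdr.
  exact: dvdn_trans (dvdn_gcdl _ _).
Qed.
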